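(* Let $Q$ be a commutative loop possessing a subgroup of index $2$. Then $[Q:N_\mu(Q)]\le 2$ if and only if there exist a commutative group $G$ and a bijection $f$ of $G$ such that $Q$ is isomorphic to $G(f)$.
   Context: A loop is a set with a binary operation and a neutral element $1$ in which all left and right translations are bijections. The middle nucleus of a loop $Q$ is $N_\mu(Q)=\{y\in Q:(xy)z=x(yz)\ \forall x,z\in Q\}$. Construction $G(f)$: for a commutative group $G$ (written multiplicatively) and a bijection $f:G\to G$, let $\overline{G}=\{\overline{x}:x\in G\}$ be a disjoint copy of $G$, and let $G(f)$ be the set $G\cup\overline{G}$ with multiplication $*$ defined for $x,y\in G$ by $x*y=xy$, $x*\overline{y}=\overline{xy}$, $\overline{x}*y=\overline{xy}$, $\overline{x}*\overline{y}=f(xy)$. It is a commutative loop with neutral element $1$. *)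

Set Implicit Arguments.

Definition bijective_fun {A B : Type} (f : A -> B) : Prop :=
  exists g : B -> A, (forall x, g (f x) = x) /\ (forall y, f (g y) = y).

Definition is_loop {Q : Type} (mul : Q -> Q -> Q) (one : Q) : Prop :=
  (forall x, mul one x = x) /\ (forall x, mul x one = x) /\
  (forall a, bijective_fun (fun x => mul a x)) /\
  (forall a, bijective_fun (fun x => mul x a)).

Definition commutative_op {Q : Type} (mul : Q -> Q -> Q) : Prop :=
  forall x y, mul x y = mul y x.

Definition is_comm_group {G : Type} (mul : G -> G -> G) (one : G) : Prop :=
  (forall x y z, mul (mul x y) z = mul x (mul y z)) /\
  (forall x, mul one x = x) /\ (forall x, mul x one = x) /\
  (forall x, exists y, mul x y = one /\ mul y x = one) /\
  commutative_op mul.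

Definition is_subloop {Q : Type} (mul : Q -> Q -> Q) (one : Q) (H : Q -> Prop)
  : Prop :=
  H one /\ (forall a b, H a -> H b -> H (mul a b)) /\
  (forall a b x, H a -> H b -> mul a x = b -> H x) /\
  (forall a b x, H a -> H b -> mul x a = b -> H x).

Definition is_subgroup {Q : Type} (mul : Q -> Q -> Q) (one : Q) (H : Q -> Prop)
  : Prop :=
  is_subloop mul one H /\
  (forall x y z, H x -> H y -> H z -> mul (mul x y) z = mul x (mul y z)).

Definition coset {Q : Type} (mul : Q -> Q -> Q) (H : Q -> Prop) (x : Q)
  : Q -> Prop := fun y => exists h, H h /\ y = mul x h.

Definition same_set {Q : Type} (A B : Q -> Prop) : Prop :=
  forall y, A y <-> B y.

Definition index_eq2 {Q : Type} (mul : Q -> Q -> Q) (H : Q -> Prop) : Prop :=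
  exists a b, ~ same_set (coset mul H a) (coset mul H b) /\
    forall x, same_set (coset mul H x) (coset mul H a) \/
              same_set (coset mul H x) (coset mul H b).

Definition index_le2 {Q : Type} (mul : Q -> Q -> Q) (H : Q -> Prop) : Prop :=
  exists a b, forall x, same_set (coset mul H x) (coset mul H a) \/
                        same_set (coset mul H x) (coset mul H b).

Definition middle_nucleus {Q : Type} (mul : Q -> Q -> Q) : Q -> Prop :=
  fun y => forall x z, mul (mul x y) z = mul x (mul y z).

(* The construction G(f): carrier G + G, inl x = x, inr x = overline x. *)
Definition Gf_mul {G : Type} (mul : G -> G -> G) (f : G -> G)
  (u v : G + G) : G + G :=
  match u, v with
  | inl x, inl y => inl (mul x y)
  | inl x, inr y => inr (mul x y)
  | inr x, inl y => inr (mul x y)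
  | inr x, inr y => inl (f (mul x y))
  end.

Definition loop_iso {A B : Type} (mulA : A -> A -> A) (mulB : B -> B -> B)
  (phi : A -> B) : Prop :=
  bijective_fun phi /\ forall a b, phi (mulA a b) = mulB (phi a) (phi b).

From Stdlib Require Import Classical ClassicalEpsilon ProofIrrelevance Bool.

(* The key fact is a decomposition theorem: if P is a
   set of middle-nuclear elements containing 1, closed under products and
   inverses, of index at most 2 and not all of Q, then for any c outside P
   the map G(f) -> Q, x |-> x, xbar |-> c x (with G = P, f(t) = c (c t)) is
   an isomorphism.  We apply it to P = N_mu(Q) when the nucleus is proper
   (the nucleus of a commutative loop is a subgroup), and to the given
   index-2 subgroup when Q is a group.

   In G(f) the elements of G are nuclear, and if some xbar is
   nuclear then f is G-linear and every element is nuclear.  Transporting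
   along the isomorphism, N_mu(Q) is either Q or the kernel of the
   homomorphism Q -> Z/2 recording the side of G(f); a kernel of a
   homomorphism to Z/2 always has index at most 2. *)

Lemma loop_lcancel {Q} {mul : Q -> Q -> Q} {one} (HQ : is_loop mul one) a x y :
  mul a x = mul a y -> x = y.
Proof.
  destruct HQ as [_ [_ [HL _]]]. destruct (HL a) as [g [Hg _]]. intro E.
  rewrite <- (Hg x), <- (Hg y). cbv beta. rewrite E. reflexivity.
Qed.

Lemma loop_ldiv {Q} {mul : Q -> Q -> Q} {one} (HQ : is_loop mul one) a b :
  exists x, mul a x = b.
Proof.
  destruct HQ as [_ [_ [HL _]]]. destruct (HL a) as [g [_ Hg]].
  exists (g b). exact (Hg b).
Qed.

Lemma inj_surj_bij {A B : Type} (f : A -> B) :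
  (forall x y, f x = f y -> x = y) -> (forall y, exists x, f x = y) ->
  bijective_fun f.
Proof.
  intros Hi Hs.
  exists (fun y => proj1_sig (constructive_indefinite_description _ (Hs y))).
  split.
  - intro x. destruct (constructive_indefinite_description _ (Hs (f x))) as [z Hz].
    simpl. apply Hi. exact Hz.
  - intro y. destruct (constructive_indefinite_description _ (Hs y)) as [z Hz].
    simpl. exact Hz.
Qed.

Lemma loop_iso_inverse {A B : Type} (mulA : A -> A -> A) (mulB : B -> B -> B)
  (psi : B -> A) :
  bijective_fun psi -> (forall u v, psi (mulB u v) = mulA (psi u) (psi v)) ->
  exists phi : A -> B, loop_iso mulA mulB phi.
Proof.
  intros [phi [Hphi Hpsi]] Hhom.
  assert (psi_inj : forall u v, psi u = psi v -> u = v).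
  { intros u v E. rewrite <- (Hphi u), <- (Hphi v), E. reflexivity. }
  exists phi. split.
  - exists psi. split; assumption.
  - intros a b. apply psi_inj. rewrite Hhom, !Hpsi. reflexivity.
Qed.

Lemma loop_iso_nucleus {A B : Type} {mulA : A -> A -> A} {mulB : B -> B -> B}
  {phi : A -> B} (Hiso : loop_iso mulA mulB phi) q :
  middle_nucleus mulA q <-> middle_nucleus mulB (phi q).
Proof.
  destruct Hiso as [[psi [Hpsi Hphi]] Hhom]. split.
  - intros Nq u w. rewrite <- (Hphi u), <- (Hphi w), <- !Hhom, Nq. reflexivity.
  - intros Mq x z. rewrite <- (Hpsi (mulA (mulA x q) z)), <- (Hpsi (mulA x (mulA q z))).
    f_equal. rewrite !Hhom. apply Mq.
Qed.

Lemma index_le2_outside {Q} {mul : Q -> Q -> Q} {one} (HQ : is_loop mul one)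
  (P : Q -> Prop) (P_one : P one) (Hi : index_le2 mul P) d (Pd : ~ P d) :
  forall q, ~ P q -> exists g, P g /\ q = mul d g.
Proof.
  destruct HQ as [Hl1 [Hr1 _]].
  assert (coset_one : forall y, coset mul P one y <-> P y).
  { intro y; split.
    - intros [h [Ph E]]. rewrite Hl1 in E. subst; exact Ph.
    - intro Py. exists y. split; auto. }
  assert (coset_self : forall q, coset mul P q q).
  { intro q. exists one. split; auto. }
  assert (coset_out : forall q, ~ P q -> ~ same_set (coset mul P q) (coset mul P one)).
  { intros q Hq S. apply Hq, coset_one, S, coset_self. }
  intros q Hq. destruct Hi as [a [b Hab]].
  assert (Hdq : coset mul P d q).
  { destruct (Hab one) as [E1|E1]; destruct (Hab q) as [Eq|Eq];
      destruct (Hab d) as [Ed|Ed];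
      first
      [ apply Ed, Eq, coset_self
      | exfalso; apply (coset_out q Hq); intro y; specialize (Eq y); specialize (E1 y); tauto
      | exfalso; apply (coset_out d Pd); intro y; specialize (Ed y); specialize (E1 y); tauto ]. }
  destruct Hdq as [g [Pg E]]. exists g. auto.
Qed.

Lemma index_eq2_proper {Q} {mul : Q -> Q -> Q} {one} (HQ : is_loop mul one)
  (H : Q -> Prop) : index_eq2 mul H -> exists d, ~ H d.
Proof.
  intros [a [b [Hne _]]]. apply NNPP. intro Hn.
  assert (Hall : forall d, H d) by (intro d; apply NNPP; intro; apply Hn; eauto).
  apply Hne. intro y. split; intros _.
  - destruct (loop_ldiv HQ b y) as [h Eh]. exists h; auto.
  - destruct (loop_ldiv HQ a y) as [h Eh]. exists h; auto.
Qed.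

(* The kernel of a homomorphism from a loop to Z/2 = (bool, xorb) has index
   at most 2: its cosets are the two fibres. *)
Lemma index_le2_kernel {Q} {mul : Q -> Q -> Q} {one} (HQ : is_loop mul one)
  (s : Q -> bool) (Hs : forall x y, s (mul x y) = xorb (s x) (s y))
  (P : Q -> Prop) (HP : forall y, P y <-> s y = false) :
  index_le2 mul P.
Proof.
  assert (coset_fibre : forall x y, coset mul P x y <-> s y = s x).
  { intros x y. split.
    - intros [h [Ph ->]]. rewrite Hs, (proj1 (HP h) Ph), xorb_false_r. reflexivity.
    - intro S. destruct (loop_ldiv HQ x y) as [h Eh]. exists h. split; auto.
      apply HP. rewrite <- Eh, Hs in S.
      destruct (s x), (s h); simpl in S; auto; discriminate. }
  assert (s_one : s one = false).
  { destruct HQ as [Hl1 _].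
    pose proof (Hs one one) as E. rewrite Hl1, xorb_nilpotent in E. exact E. }
  destruct (classic (exists b, s b = true)) as [[b Sb]|Hnone].
  - exists one, b. intro x.
    destruct (s x) eqn:Sx; [right|left]; intro y; rewrite !coset_fibre, Sx;
      [rewrite Sb | rewrite s_one]; reflexivity.
  - exists one, one. intro x. left. intro y. rewrite !coset_fibre, s_one.
    destruct (s x) eqn:Sx; [exfalso; eauto | reflexivity].
Qed.

Section Nucleus.
Variables (Q : Type) (mul : Q -> Q -> Q) (one : Q).
Hypotheses (HQ : is_loop mul one) (Hcomm : commutative_op mul).

Lemma nucleus_one : middle_nucleus mul one.
Proof.
  destruct HQ as [Hl1 [Hr1 _]]. intros x z. rewrite Hr1, Hl1. reflexivity.
Qed.

Lemma nucleus_mul a b :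
  middle_nucleus mul a -> middle_nucleus mul b -> middle_nucleus mul (mul a b).
Proof. intros Na Nb x z. rewrite <- Na, Nb, Na, Nb. reflexivity. Qed.

(* The right inverse a' of a nuclear a is nuclear: right multiplication by a'
   undoes right multiplication by a, which lets us move a' across. *)
Lemma nucleus_inv a :
  middle_nucleus mul a -> exists a', middle_nucleus mul a' /\ mul a a' = one.
Proof.
  intro Na. destruct HQ as [_ [Hr1 _]].
  destruct (loop_ldiv HQ a one) as [a' Ea]. exists a'. split; auto.
  assert (undo : forall x, mul (mul x a') a = x).
  { intro x. destruct (loop_ldiv HQ a x) as [y <-].
    rewrite (Hcomm a y), Na, Ea, Hr1. reflexivity. }
  intros x z.
  assert (Az : mul a (mul a' z) = z) by (rewrite Hcomm, (Hcomm a' z), undo; reflexivity).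
  rewrite <- (undo x) at 2. rewrite Na, Az. reflexivity.
Qed.

End Nucleus.

Arguments nucleus_one {Q mul one}.
Arguments nucleus_inv {Q mul one}.

Section Decomposition.
Variables (Q : Type) (mul : Q -> Q -> Q) (one : Q).
Hypotheses (HQ : is_loop mul one) (Hcomm : commutative_op mul).
Variable P : Q -> Prop.
Hypotheses (P_one : P one) (P_mul : forall x y, P x -> P y -> P (mul x y))
  (P_inv : forall x, P x -> exists y, P y /\ mul x y = one)
  (P_nuc : forall x, P x -> middle_nucleus mul x)
  (P_index : index_le2 mul P).
Variable c : Q.
Hypothesis c_out : ~ P c.

(* P is closed under right division, since its elements are nuclear. *)
Lemma P_rdiv x z : P x -> P (mul z x) -> P z.
Proof.
  intros Px Pzx. destruct HQ as [_ [Hr1 _]]. destruct (P_inv x Px) as [x' [Px' E]].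
  replace z with (mul (mul z x) x') by (rewrite (P_nuc x Px), E, Hr1; reflexivity).
  apply P_mul; auto.
Qed.

Lemma cP_out x : P x -> ~ P (mul c x).
Proof. intros Px Pcx. exact (c_out (P_rdiv x c Px Pcx)). Qed.

Lemma outside_cP q : ~ P q -> exists g, P g /\ q = mul c g.
Proof. exact (index_le2_outside HQ P P_one P_index c c_out q). Qed.

(* c (c x) lies in P: otherwise c (c x) = c h gives c x = h in P. *)
Lemma ccP_in x : P x -> P (mul c (mul c x)).
Proof.
  intros Px. apply NNPP. intro Hn. destruct (outside_cP _ Hn) as [h [Ph E]].
  apply (loop_lcancel HQ) in E. apply (cP_out x Px). rewrite E. exact Ph.
Qed.

Lemma c_shift x y : P x -> P y -> mul x (mul c y) = mul c (mul x y).
Proof. intros Px Py. rewrite Hcomm, (P_nuc y Py), (Hcomm y x). reflexivity. Qed.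

Definition Psub : Type := {q | P q}.

Definition Psub_mul (x y : Psub) : Psub :=
  exist P (mul (proj1_sig x) (proj1_sig y)) (P_mul _ _ (proj2_sig x) (proj2_sig y)).

Definition Psub_one : Psub := exist P one P_one.

Definition twist (t : Psub) : Psub :=
  exist P (mul c (mul c (proj1_sig t))) (ccP_in _ (proj2_sig t)).

Lemma Psub_comm_group : is_comm_group Psub_mul Psub_one.
Proof.
  destruct HQ as [Hl1 [Hr1 _]].
  split; [|split; [|split; [|split]]].
  - intros [x px] [y py] [z pz]. apply subset_eq_compat. apply (P_nuc y py).
  - intros [x px]. apply subset_eq_compat. apply Hl1.
  - intros [x px]. apply subset_eq_compat. apply Hr1.
  - intros [x px]. destruct (P_inv x px) as [y [py E]].
    exists (exist P y py). split; apply subset_eq_compat; auto.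
    rewrite Hcomm; exact E.
  - intros [x px] [y py]. apply subset_eq_compat. apply Hcomm.
Qed.

Lemma twist_bijective : bijective_fun twist.
Proof.
  apply inj_surj_bij.
  - intros [x px] [y py] E. apply subset_eq_compat.
    apply EqdepFacts.eq_sig_fst in E.
    exact (loop_lcancel HQ _ _ _ (loop_lcancel HQ _ _ _ E)).
  - intros [s ps]. destruct (loop_ldiv HQ c s) as [u Hu].
    assert (nu : ~ P u) by (intro Pu; apply (cP_out u Pu); rewrite Hu; exact ps).
    destruct (outside_cP u nu) as [t [pt Et]].
    exists (exist P t pt). apply subset_eq_compat. simpl. rewrite <- Et. exact Hu.
Qed.

Definition embed (u : Psub + Psub) : Q :=
  match u with inl g => proj1_sig g | inr g => mul c (proj1_sig g) end.

Lemma embed_injective u v : embed u = embed v -> u = v.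
Proof.
  destruct u as [[x px]|[x px]], v as [[y py]|[y py]]; simpl; intro E.
  - f_equal. apply subset_eq_compat. exact E.
  - exfalso. apply (cP_out y py). rewrite <- E. exact px.
  - exfalso. apply (cP_out x px). rewrite E. exact py.
  - f_equal. apply subset_eq_compat. exact (loop_lcancel HQ _ _ _ E).
Qed.

Lemma embed_surjective q : exists u, embed u = q.
Proof.
  destruct (classic (P q)) as [pq|nq].
  - exists (inl (exist P q pq)). reflexivity.
  - destruct (outside_cP q nq) as [g [pg E]]. exists (inr (exist P g pg)).
    symmetry; exact E.
Qed.

Lemma embed_hom u v : embed (Gf_mul Psub_mul twist u v) = mul (embed u) (embed v).
Proof.
  destruct u as [[x px]|[x px]], v as [[y py]|[y py]]; simpl.
  - reflexivity.
  - symmetry. apply c_shift; auto.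
  - symmetry. apply (P_nuc x px).
  - rewrite (P_nuc x px c (mul c y)), (c_shift x y px py). reflexivity.
Qed.

Theorem decomposition :
  exists (G : Type) (gmul : G -> G -> G) (g1 : G) (f : G -> G),
    is_comm_group gmul g1 /\ bijective_fun f /\
    exists phi : Q -> G + G, loop_iso mul (Gf_mul gmul f) phi.
Proof.
  exists Psub, Psub_mul, Psub_one, twist.
  split; [exact Psub_comm_group | split; [exact twist_bijective |]].
  apply (loop_iso_inverse _ _ embed); [| exact embed_hom].
  exact (inj_surj_bij embed embed_injective embed_surjective).
Qed.

End Decomposition.

Arguments decomposition {Q mul one}.

Section GfNucleus.
Variables (G : Type) (gmul : G -> G -> G) (g1 : G) (f : G -> G).
Hypothesis HG : is_comm_group gmul g1.

Definition side (u : G + G) : bool :=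
  match u with inl _ => false | inr _ => true end.

Lemma side_mul u v : side (Gf_mul gmul f u v) = xorb (side u) (side v).
Proof. destruct u, v; reflexivity. Qed.

Lemma Gf_inl_nuclear y : middle_nucleus (Gf_mul gmul f) (inl y).
Proof.
  destruct HG as [Ha _]. intros [x|x] [z|z]; simpl; rewrite Ha; reflexivity.
Qed.

Lemma twist_linear y0 :
  middle_nucleus (Gf_mul gmul f) (inr y0) -> forall x s, f (gmul x s) = gmul x (f s).
Proof.
  intros M0 x s. destruct HG as [Ha [Hl [_ [Hinv _]]]].
  destruct (Hinv y0) as [yi [E1 _]].
  pose proof (M0 (inl x) (inr (gmul yi s))) as E. simpl in E. injection E as E.
  assert (E2 : gmul y0 (gmul yi s) = s) by (rewrite <- Ha, E1, Hl; reflexivity).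
  rewrite E2, Ha, E2 in E. exact E.
Qed.

Lemma Gf_all_nuclear :
  (forall x s, f (gmul x s) = gmul x (f s)) -> forall u, middle_nucleus (Gf_mul gmul f) u.
Proof.
  intro F. destruct HG as [Ha [_ [_ [_ Hc]]]].
  intros [y|y]; [apply Gf_inl_nuclear |].
  intros [x|x] [z|z]; simpl.
  - rewrite Ha; reflexivity.
  - rewrite Ha, F; reflexivity.
  - f_equal. rewrite <- Ha, (Hc (gmul x y) z), (F z). apply Hc.
  - f_equal. rewrite <- F, (Hc _ z), <- F. f_equal. rewrite Hc, Ha. reflexivity.
Qed.

Lemma Gf_nucleus_dichotomy :
  (forall u, middle_nucleus (Gf_mul gmul f) u) \/
  (forall u, middle_nucleus (Gf_mul gmul f) u <-> side u = false).
Proof.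
  destruct (classic (exists y0, middle_nucleus (Gf_mul gmul f) (inr y0))) as [[y0 M0]|Hno].
  - left. exact (Gf_all_nuclear (twist_linear y0 M0)).
  - right. intros [y|y]; simpl; split; intro H; auto.
    + apply Gf_inl_nuclear.
    + exfalso; eauto.
    + discriminate.
Qed.

End GfNucleus.

Arguments side {G}.
Arguments side_mul {G}.
Arguments Gf_nucleus_dichotomy {G gmul g1}.

Theorem corollary2p3 (Q : Type) (mul : Q -> Q -> Q) (one : Q)
  (HQ : is_loop mul one) (Hcomm : commutative_op mul)
  (Hsub : exists H : Q -> Prop, is_subgroup mul one H /\ index_eq2 mul H) :
  index_le2 mul (middle_nucleus mul) <->
  exists (G : Type) (gmul : G -> G -> G) (g1 : G) (f : G -> G),
    is_comm_group gmul g1 /\ bijective_fun f /\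
    exists phi : Q -> G + G, loop_iso mul (Gf_mul gmul f) phi.
Proof.
  split.
  - intro Hi. destruct (classic (forall q, middle_nucleus mul q)) as [Hall|Hnall].
    + (* Q is a group: decompose along the given index-2 subgroup. *)
      destruct Hsub as [H [[[H1 [Hm [Hld _]]] _] Hi2]].
      destruct (index_eq2_proper HQ H Hi2) as [d Hd].
      apply (decomposition HQ Hcomm H H1 Hm) with (c := d); auto.
      * intros x Hx. destruct (loop_ldiv HQ x one) as [y Ey].
        exists y; split; auto. apply (Hld x one y); auto.
      * destruct Hi2 as [a [b [_ Hab]]]. exists a, b. exact Hab.
    + (* The nucleus is proper: decompose along it. *)
      destruct (not_all_ex_not _ _ Hnall) as [d Hd].
      exact (decomposition HQ Hcomm _ (nucleus_one HQ) (nucleus_mul _ mul)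
               (nucleus_inv HQ Hcomm) (fun x Nx => Nx) Hi d Hd).
  - intros [G [gmul [g1 [f [HG [_ [phi Hiso]]]]]]].
    pose proof (loop_iso_nucleus Hiso) as Ntransport.
    destruct (Gf_nucleus_dichotomy f HG) as [Hall|Hside].
    + apply (index_le2_kernel HQ (fun _ => false)); [reflexivity|].
      intro y. rewrite Ntransport. split; auto.
    + apply (index_le2_kernel HQ (fun q => side (phi q))).
      * intros x y. destruct Hiso as [_ Hhom]. rewrite Hhom. apply side_mul.
      * intro y. rewrite Ntransport. apply Hside.
Qed.
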